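(* Consider the Robertson-Walker Riemann-Cartan geometry in coordinates $(t,r,\theta,\phi)$ with coframe $\mathbf h^1=dt$, $\mathbf h^2=\frac{a(t)}{\sqrt{1-kr^2}}dr$, $\mathbf h^3=a(t)r\,d\theta$, $\mathbf h^4=a(t)r\sin\theta\,d\phi$ ($a>0$, $k\in\mathbb R$) and metric-compatible connection whose only non-zero components (up to $\omega_{abc}=-\omega_{bac}$) are $\omega_{122}=\omega_{133}=\omega_{144}=W_1(t)$, $\omega_{234}=-\omega_{243}=\omega_{342}=W_2(t)$, $\omega_{233}=\omega_{244}=-\frac{\sqrt{1-kr^2}}{a r}$, $\omega_{344}=-\frac{\cos\theta}{a r\sin\theta}$. Then the curvature of this connection vanishes (teleparallel RW geometry) if and only if $(W_1,W_2)$ is one of (1) $W_1=0,\ W_2=-\frac{\sqrt k}{a}$; (2) $W_1=0,\ W_2=\frac{\sqrt k}{a}$; (3) $W_1=-\frac{\sqrt{-k}}{a},\ W_2=0$; (4) $W_1=\frac{\sqrt{-k}}{a},\ W_2=0$, where real-valuedness requires $k\ge0$ in cases (1),(2) and $k\le0$ in cases (3),(4); for $k=0$ the four cases coincide.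
   Context: Frame indices in $\{1,2,3,4\}$, $\eta=\mathrm{diag}(-1,1,1,1)$, $\omega_{abc}=\eta_{ad}\omega^d{}_{bc}$, $\boldsymbol\omega^a{}_b=\omega^a{}_{bc}\mathbf h^c$, dual frame $\mathbf h_a=h_a{}^\mu\partial_\mu$. Curvature: $R^a{}_{bcd}=h_c{}^\mu\partial_\mu\omega^a{}_{bd}-h_d{}^\nu\partial_\nu\omega^a{}_{bc}+\omega^a{}_{fc}\omega^f{}_{bd}-\omega^a{}_{fd}\omega^f{}_{bc}$. *)

From Stdlib Require Import Reals.
From Coquelicot Require Import Coquelicot.
Open Scope R_scope.

(* Frame / coordinate indices 1..4 ; coordinates (t, r, theta, phi) = (1,2,3,4). *)
Inductive Idx := I1 | I2 | I3 | I4.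

Definition sum4 (f : Idx -> R) : R := f I1 + f I2 + f I3 + f I4.

(* Minkowski metric eta = diag(-1,1,1,1) (its own inverse). *)
Definition eta (i : Idx) : R := match i with I1 => -1 | _ => 1 end.

Definition pd (F : R -> R -> R -> R -> R) (mu : Idx) (t r th ph : R) : R :=
  match mu with
  | I1 => Derive (fun s => F s r th ph) t
  | I2 => Derive (fun s => F t s th ph) r
  | I3 => Derive (fun s => F t r s ph) th
  | I4 => Derive (fun s => F t r th s) ph
  end.

Definition coframe (a : R -> R) (k : R) (c mu : Idx) (t r th : R) : R :=
  match c, mu with
  | I1, I1 => 1
  | I2, I2 => a t / sqrt (1 - k * r ^ 2)
  | I3, I3 => a t * r
  | I4, I4 => a t * r * sin th
  | _, _ => 0
  end.

(* Lower-index connection components omega_{abc} of the RW ansatz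
   (all components listed, including those obtained from omega_{abc} = -omega_{bac}). *)
Definition omega_low (a W1 W2 : R -> R) (k : R) (i j l : Idx) (t r th : R) : R :=
  match i, j, l with
  | I1, I2, I2 | I1, I3, I3 | I1, I4, I4 => W1 t
  | I2, I1, I2 | I3, I1, I3 | I4, I1, I4 => - W1 t
  | I2, I3, I4 | I3, I4, I2 | I4, I2, I3 => W2 t
  | I2, I4, I3 | I3, I2, I4 | I4, I3, I2 => - W2 t
  | I2, I3, I3 | I2, I4, I4 => - (sqrt (1 - k * r ^ 2) / (a t * r))
  | I3, I2, I3 | I4, I2, I4 => sqrt (1 - k * r ^ 2) / (a t * r)
  | I3, I4, I4 => - (cos th / (a t * r * sin th))
  | I4, I3, I4 => cos th / (a t * r * sin th)
  | _, _, _ => 0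
  end.

Definition omega_up (a W1 W2 : R -> R) (k : R) (i j l : Idx) (t r th : R) : R :=
  eta i * omega_low a W1 W2 k i j l t r th.

(* Coordinate components of the connection 1-form
   omega^a_b = omega^a_{bc} h^c :  omega^a_{b mu} = sum_c omega^a_{bc} h^c_mu. *)
Definition omega_coord (a W1 W2 : R -> R) (k : R) (i j mu : Idx)
  (t r th ph : R) : R :=
  sum4 (fun c => omega_up a W1 W2 k i j c t r th * coframe a k c mu t r th).

(* Coordinate components of the curvature 2-form
   R^a_b = d omega^a_b + omega^a_c /\ omega^c_b :
   R^a_{b mu nu} = d_mu omega^a_{b nu} - d_nu omega^a_{b mu}
                  + omega^a_{c mu} omega^c_{b nu} - omega^a_{c nu} omega^c_{b mu}. *)
Definition curvature (a W1 W2 : R -> R) (k : R) (i j mu nu : Idx)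
  (t r th ph : R) : R :=
  pd (omega_coord a W1 W2 k i j nu) mu t r th ph
  - pd (omega_coord a W1 W2 k i j mu) nu t r th ph
  + sum4 (fun c =>
      omega_coord a W1 W2 k i c mu t r th ph * omega_coord a W1 W2 k c j nu t r th ph
      - omega_coord a W1 W2 k i c nu t r th ph * omega_coord a W1 W2 k c j mu t r th ph).

Definition flat (a W1 W2 : R -> R) (k : R) : Prop :=
  forall t r th ph, 0 < r -> 0 < 1 - k * r ^ 2 -> 0 < th < PI ->
  forall i j mu nu, curvature a W1 W2 k i j mu nu t r th ph = 0.

From Stdlib Require Import Reals Lra Nsatz FunctionalExtensionality.
From Coquelicot Require Import Coquelicot.
Open Scope R_scope.

(* Flatness of the RW connection is decided by two curvature components.
   At any point of the coordinate domain,
     R^1_{2 34} = 2 W1 W2 a^2 r^2 sin(theta),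
     R^2_{3 23} = r / sqrt(1 - k r^2) * (k + a^2 (W1^2 - W2^2)),
   so flatness forces, at every time t, for u_i := a W_i :
     u1 u2 = 0  and  u2^2 - u1^2 = k.
   Since u1, u2 are continuous, the intermediate value theorem makes them
   constant, so W_i = c_i / a for constants with c1 c2 = 0 and k = c2^2 - c1^2
   (a "teleparallel pair").  Conversely, a direct computation shows that every
   teleparallel pair has vanishing curvature.  The four cases of the theorem
   are the four sign choices solving c1 c2 = 0, k = c2^2 - c1^2. *)

(* [auto_derive] writes the radicand 1 - k r^2 in this expanded form. *)
Lemma radicand_normal (k r : R) : 1 + - (k * (r * (r * 1))) = 1 - k * r ^ 2.
Proof. ring. Qed.

Ltac derive_side_conditions :=
  repeat split; first [ exact I | solve [auto] | lra ].

(* Replace every coordinate derivative in the goal by its closed form; the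
   derivative of the scale factor [a] itself stays abstract. *)
Ltac eval_derivatives a :=
  repeat match goal with
  | |- context [Derive ?f ?x] =>
     lazymatch f with
     | (fun x => a x) => fail
     | a => fail
     | _ => erewrite (is_derive_unique f x);
            [| auto_derive; [ derive_side_conditions .. | reflexivity ] ]
     end
  end.

Ltac expand_curvature a :=
  unfold curvature, pd, omega_coord, sum4, omega_up, eta, omega_low, coframe;
  cbv beta iota; eval_derivatives a;
  rewrite ?radicand_normal.

(* The curvature 2-form is antisymmetric in its form indices, so it suffices
   to compute the components with mu < nu. *)
Lemma curvature_antisym (a W1 W2 : R -> R) (k : R) (i j mu nu : Idx) (t r th ph : R) :
  curvature a W1 W2 k i j mu nu t r th ph = - curvature a W1 W2 k i j nu mu t r th ph.
Proof. unfold curvature, sum4; ring. Qed.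

Lemma curvature_diag (a W1 W2 : R -> R) (k : R) (i j mu : Idx) (t r th ph : R) :
  curvature a W1 W2 k i j mu mu t r th ph = 0.
Proof. unfold curvature, sum4; ring. Qed.

Section Obstructions.
Variables (a W1 W2 : R -> R) (k t r th ph : R).
Hypotheses (Hda : forall t, ex_derive a t) (HdW1 : forall t, ex_derive W1 t)
  (HdW2 : forall t, ex_derive W2 t).
Hypotheses (Hat : a t <> 0) (Hr : r <> 0) (Hs : sin th <> 0) (Hk : 0 < 1 - k * r ^ 2).

Lemma curvature_1234 :
  curvature a W1 W2 k I1 I2 I3 I4 t r th ph = 2 * W1 t * W2 t * a t ^ 2 * r ^ 2 * sin th.
Proof.
  expand_curvature a.
  assert (HS : sqrt (1 - k * r ^ 2) <> 0) by (apply Rgt_not_eq, sqrt_lt_R0; lra).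
  field; auto.
Qed.

Lemma curvature_2323 :
  curvature a W1 W2 k I2 I3 I2 I3 t r th ph
  = r / sqrt (1 - k * r ^ 2) * (k + a t ^ 2 * (W1 t ^ 2 - W2 t ^ 2)).
Proof.
  expand_curvature a.
  assert (HS : sqrt (1 - k * r ^ 2) <> 0) by (apply Rgt_not_eq, sqrt_lt_R0; lra).
  field; auto.
Qed.
End Obstructions.

Definition teleparallel_pair (a W1 W2 : R -> R) (k c1 c2 : R) : Prop :=
  c1 * c2 = 0 /\ k = c2 * c2 - c1 * c1 /\ forall t, W1 t = c1 / a t /\ W2 t = c2 / a t.

(* Direct computation: a teleparallel pair has all curvature components
   with mu < nu equal to zero.  The only algebraic facts needed are
   c1 c2 = 0 and sqrt(1 - k r^2)^2 = 1 - k r^2. *)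
Section ConstantPair.
Variables (a : R -> R) (c1 c2 t r th ph : R).
Hypotheses (Hda : forall t, ex_derive a t).
Hypotheses (Hat : a t <> 0) (Hr : r <> 0) (Hs : sin th <> 0)
  (Hk : 0 < 1 - (c2 * c2 - c1 * c1) * r ^ 2) (Hc : c1 * c2 = 0).

Lemma constant_pair_curvature_vanishes i j mu nu :
  (mu = I1 /\ (nu = I2 \/ nu = I3 \/ nu = I4)) \/ (mu = I2 /\ (nu = I3 \/ nu = I4)) \/
  (mu = I3 /\ nu = I4) ->
  curvature a (fun t => c1 / a t) (fun t => c2 / a t) (c2 * c2 - c1 * c1)
    i j mu nu t r th ph = 0.
Proof.
  assert (HSS := sqrt_sqrt _ (Rlt_le _ _ Hk)).
  assert (HS : sqrt (1 - (c2 * c2 - c1 * c1) * r ^ 2) <> 0)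
    by (apply Rgt_not_eq, sqrt_lt_R0; lra).
  intros Hmn.
  destruct Hmn as [[-> [-> | [-> | ->]]] | [[-> [-> | ->]] | [-> ->]]];
  destruct i, j; expand_curvature a;
  set (S := sqrt _) in *; set (da := Derive a t);
  field_simplify_eq; auto; cbn [pow] in *; nsatz.
Qed.
End ConstantPair.

Lemma flat_of_teleparallel_pair (a W1 W2 : R -> R) (k c1 c2 : R) :
  (forall t, 0 < a t) -> (forall t, ex_derive a t) ->
  teleparallel_pair a W1 W2 k c1 c2 -> flat a W1 W2 k.
Proof.
  intros Ha Hda [Hc [-> HW]].
  replace W1 with (fun t => c1 / a t) by (extensionality t; symmetry; apply HW).
  replace W2 with (fun t => c2 / a t) by (extensionality t; symmetry; apply HW).
  intros t r th ph Hr Hk Hth i j mu nu.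
  assert (Hs : sin th <> 0) by (apply Rgt_not_eq, sin_gt_0; lra).
  assert (Hat : a t <> 0) by (apply Rgt_not_eq, Ha).
  assert (Hr' : r <> 0) by lra.
  destruct mu, nu; try apply curvature_diag;
  first
  [ solve [apply constant_pair_curvature_vanishes; auto 10]
  | rewrite curvature_antisym; apply Ropp_eq_0_compat;
    apply constant_pair_curvature_vanishes; auto 10 ].
Qed.

(* A continuous function whose square is a positive constant cannot change
   sign (intermediate value theorem), hence is constant. *)
Lemma square_constant_is_constant (g : R -> R) (c : R) :
  continuity g -> 0 < c -> (forall t, g t * g t = c) -> forall x y, g x = g y.
Proof.
  intros Hg Hc Hsq.
  assert (Hne : forall t, g t <> 0)
    by (intros t E; specialize (Hsq t); rewrite E in Hsq; lra).
  assert (Hsame : forall x y, x <= y -> 0 < g x * g y).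
  { intros x y Hxy. destruct (Rlt_dec 0 (g x * g y)) as [h|h]; [exact h|].
    destruct (IVT_cor g x y Hg Hxy (Rnot_lt_le _ _ h)) as [z [_ hz]].
    destruct (Hne z hz). }
  assert (Hsym : forall x y, 0 < g x * g y).
  { intros x y. destruct (Rle_dec x y) as [h|h]; [auto|].
    rewrite Rmult_comm; apply Hsame; lra. }
  intros x y.
  assert (Hfactor : (g x - g y) * (g x + g y) = 0).
  { replace ((g x - g y) * (g x + g y)) with (g x * g x - g y * g y) by ring.
    rewrite !Hsq; ring. }
  assert (Hsum : g x + g y <> 0).
  { intro E. specialize (Hsym x y). replace (g y) with (- g x) in Hsym by lra. nra. }
  destruct (Rmult_integral _ _ Hfactor) as [h|h]; lra.
Qed.

(* Two continuous functions with u1 u2 = 0 and u2^2 - u1^2 = k constant are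
   both constant: for k > 0 the first vanishes and the second has constant
   square; k < 0 is symmetric; for k = 0 both vanish. *)
Lemma orthogonal_pair_constant_pos (u1 u2 : R -> R) (k : R) :
  continuity u2 -> 0 < k ->
  (forall t, u1 t * u2 t = 0) -> (forall t, u2 t * u2 t - u1 t * u1 t = k) ->
  forall x y, u1 x = u1 y /\ u2 x = u2 y.
Proof.
  intros Hu2 Hk Hprod Hdiff.
  assert (Hu1 : forall t, u1 t = 0).
  { intro t. specialize (Hprod t). specialize (Hdiff t).
    destruct (Rmult_integral _ _ Hprod) as [h|h]; [exact h|].
    rewrite h in Hdiff. nra. }
  intros x y. split; [now rewrite !Hu1|].
  apply (square_constant_is_constant u2 k Hu2 Hk).
  intro t. specialize (Hdiff t). rewrite Hu1 in Hdiff. lra.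
Qed.

Lemma orthogonal_pair_constant (u1 u2 : R -> R) (k : R) :
  continuity u1 -> continuity u2 ->
  (forall t, u1 t * u2 t = 0) -> (forall t, u2 t * u2 t - u1 t * u1 t = k) ->
  forall x y, u1 x = u1 y /\ u2 x = u2 y.
Proof.
  intros Hu1 Hu2 Hprod Hdiff x y.
  destruct (Rtotal_order k 0) as [Hneg | [Hzero | Hpos]].
  - assert (Hswap : u2 x = u2 y /\ u1 x = u1 y).
    { apply (orthogonal_pair_constant_pos u2 u1 (- k)); auto; try lra.
      - intro t. rewrite Rmult_comm. apply Hprod.
      - intro t. rewrite <- (Hdiff t). ring. }
    tauto.
  - assert (Hvanish : forall t, u1 t = 0 /\ u2 t = 0).
    { intro t. specialize (Hprod t). specialize (Hdiff t). rewrite Hzero in Hdiff.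
      destruct (Rmult_integral _ _ Hprod) as [h|h]; rewrite h in Hdiff; split; nra. }
    destruct (Hvanish x), (Hvanish y). split; congruence.
  - now apply (orthogonal_pair_constant_pos u1 u2 k).
Qed.

Lemma continuity_mult_of_derivable (f g : R -> R) :
  (forall t, ex_derive f t) -> (forall t, ex_derive g t) ->
  continuity (fun t => f t * g t).
Proof.
  intros Hf Hg x. apply continuity_pt_filterlim.
  apply (ex_derive_continuous (fun t => f t * g t) x).
  auto_derive. auto.
Qed.

Lemma admissible_radius (k : R) : exists r, 0 < r /\ 0 < 1 - k * r ^ 2.
Proof.
  exists (/ (1 + Rabs k)).
  assert (Habs := Rabs_pos k). assert (Hle := Rle_abs k).
  assert (Hr : 0 < / (1 + Rabs k)) by (apply Rinv_0_lt_compat; lra).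
  assert (Hr1 : / (1 + Rabs k) * (1 + Rabs k) = 1) by (field; lra).
  split; [exact Hr | nra].
Qed.

Lemma flat_obstructions (a W1 W2 : R -> R) (k : R) :
  (forall t, 0 < a t) -> (forall t, ex_derive a t) ->
  (forall t, ex_derive W1 t) -> (forall t, ex_derive W2 t) ->
  flat a W1 W2 k ->
  forall t, W1 t * W2 t = 0 /\ k + a t ^ 2 * (W1 t ^ 2 - W2 t ^ 2) = 0.
Proof.
  intros Ha Hda HdW1 HdW2 Hflat t.
  destruct (admissible_radius k) as [r [Hr Hk]].
  assert (Hth : 0 < PI / 2 < PI) by (pose proof PI_RGT_0; lra).
  assert (Hat : 0 < a t) by apply Ha.
  assert (Hs : sin (PI / 2) <> 0) by (rewrite sin_PI2; lra).
  assert (HS : 0 < sqrt (1 - k * r ^ 2)) by (apply sqrt_lt_R0; lra).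
  pose proof (Hflat t r (PI / 2) 0 Hr Hk Hth I1 I2 I3 I4) as H1234.
  pose proof (Hflat t r (PI / 2) 0 Hr Hk Hth I2 I3 I2 I3) as H2323.
  rewrite curvature_1234, sin_PI2 in H1234 by (auto; lra).
  rewrite curvature_2323 in H2323 by (auto; lra).
  assert (Hcoef : 0 < r / sqrt (1 - k * r ^ 2))
    by (apply Rdiv_lt_0_compat; assumption).
  split.
  - assert (Hpos : 0 < 2 * a t ^ 2 * r ^ 2) by (apply Rmult_lt_0_compat; [nra | nra]).
    apply (Rmult_eq_reg_l (2 * a t ^ 2 * r ^ 2)); [| lra].
    rewrite Rmult_0_r, <- H1234. ring.
  - destruct (Rmult_integral _ _ H2323) as [h|h]; [lra | exact h].
Qed.

Lemma teleparallel_pair_of_flat (a W1 W2 : R -> R) (k : R) :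
  (forall t, 0 < a t) -> (forall t, ex_derive a t) ->
  (forall t, ex_derive W1 t) -> (forall t, ex_derive W2 t) ->
  flat a W1 W2 k -> exists c1 c2, teleparallel_pair a W1 W2 k c1 c2.
Proof.
  intros Ha Hda HdW1 HdW2 Hflat.
  pose proof (flat_obstructions a W1 W2 k Ha Hda HdW1 HdW2 Hflat) as Hobs.
  set (u1 t := W1 t * a t). set (u2 t := W2 t * a t).
  assert (Hconst : forall x y, u1 x = u1 y /\ u2 x = u2 y).
  { apply (orthogonal_pair_constant u1 u2 k);
      try apply continuity_mult_of_derivable; auto;
      intro t; destruct (Hobs t) as [HA HB]; unfold u1, u2; nra. }
  exists (u1 0), (u2 0).
  assert (Ha0 := Ha 0). destruct (Hobs 0) as [HA HB].
  split; [| split].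
  - unfold u1, u2.
    replace (W1 0 * a 0 * (W2 0 * a 0)) with (W1 0 * W2 0 * (a 0 * a 0)) by ring.
    rewrite HA; ring.
  - unfold u1, u2. nra.
  - intro t. assert (Hat : a t <> 0) by (apply Rgt_not_eq, Ha).
    destruct (Hconst t 0) as [<- <-]. unfold u1, u2. split; field; exact Hat.
Qed.

Lemma flat_iff_teleparallel_pair (a W1 W2 : R -> R) (k : R) :
  (forall t, 0 < a t) -> (forall t, ex_derive a t) ->
  (forall t, ex_derive W1 t) -> (forall t, ex_derive W2 t) ->
  flat a W1 W2 k <-> exists c1 c2, teleparallel_pair a W1 W2 k c1 c2.
Proof.
  intros Ha Hda HdW1 HdW2. split.
  - now apply teleparallel_pair_of_flat.
  - intros [c1 [c2 Hpair]]. exact (flat_of_teleparallel_pair a W1 W2 k c1 c2 Ha Hda Hpair).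
Qed.

Lemma sqrt_square_neg (x : R) : x < 0 -> sqrt (x * x) = - x.
Proof. intro Hx. rewrite <- (sqrt_square (- x)) by lra. f_equal. ring. Qed.

Lemma teleparallel_pair_cases (a W1 W2 : R -> R) (k : R) :
  (exists c1 c2, teleparallel_pair a W1 W2 k c1 c2) <->
  ((0 <= k /\ forall t, W1 t = 0 /\ W2 t = - (sqrt k / a t)) \/
   (0 <= k /\ forall t, W1 t = 0 /\ W2 t = sqrt k / a t) \/
   (k <= 0 /\ forall t, W1 t = - (sqrt (- k) / a t) /\ W2 t = 0) \/
   (k <= 0 /\ forall t, W1 t = sqrt (- k) / a t /\ W2 t = 0)).
Proof.
  split.
  - intros [c1 [c2 [Hc [-> HW]]]].
    destruct (Rmult_integral _ _ Hc) as [-> | ->].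
    + replace (c2 * c2 - 0 * 0) with (c2 * c2) by ring.
      assert (Hsq : 0 <= c2 * c2) by nra.
      destruct (Rle_or_lt 0 c2) as [Hc2 | Hc2].
      * right; left. rewrite sqrt_square by exact Hc2. split; [exact Hsq|].
        intro t. destruct (HW t) as [-> ->]. split; [unfold Rdiv; ring | reflexivity].
      * left. rewrite sqrt_square_neg by exact Hc2.
        split; [exact Hsq|]. intro t. destruct (HW t) as [-> ->].
        split; unfold Rdiv; ring.
    + replace (- (0 * 0 - c1 * c1)) with (c1 * c1) by ring.
      assert (Hsq : 0 <= c1 * c1) by nra.
      destruct (Rle_or_lt 0 c1) as [Hc1 | Hc1].
      * right; right; right. rewrite sqrt_square by exact Hc1. split; [lra|].
        intro t. destruct (HW t) as [-> ->]. split; [reflexivity | unfold Rdiv; ring].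
      * right; right; left. rewrite sqrt_square_neg by exact Hc1.
        split; [lra|]. intro t. destruct (HW t) as [-> ->].
        split; unfold Rdiv; ring.
  - intros [[Hk HW] | [[Hk HW] | [[Hk HW] | [Hk HW]]]];
      [ exists 0, (- sqrt k) | exists 0, (sqrt k)
      | exists (- sqrt (- k)), 0 | exists (sqrt (- k)), 0 ];
      (split; [ring | split; [| intro t; destruct (HW t) as [-> ->]; split; unfold Rdiv; ring]]).
    all: first [ pose proof (sqrt_sqrt k Hk) | pose proof (sqrt_sqrt (- k) ltac:(lra)) ]; lra.
Qed.

Theorem mainTheorem9 (a W1 W2 : R -> R) (k : R)
  (Ha : forall t, 0 < a t)
  (Hda : forall t, ex_derive a t)
  (HdW1 : forall t, ex_derive W1 t)
  (HdW2 : forall t, ex_derive W2 t) :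
  flat a W1 W2 k <->
  ((0 <= k /\ forall t, W1 t = 0 /\ W2 t = - (sqrt k / a t)) \/
   (0 <= k /\ forall t, W1 t = 0 /\ W2 t = sqrt k / a t) \/
   (k <= 0 /\ forall t, W1 t = - (sqrt (- k) / a t) /\ W2 t = 0) \/
   (k <= 0 /\ forall t, W1 t = sqrt (- k) / a t /\ W2 t = 0)).
Proof.
  rewrite (flat_iff_teleparallel_pair a W1 W2 k Ha Hda HdW1 HdW2).
  apply teleparallel_pair_cases.
Qed.
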